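(* Let $n \in \mathbb{N}_0$, and let $P(x), Q(x) \in \mathbb{Z}[x]$ be $n$-good polynomials. If $P(x) \equiv Q(x) \pmod 2$, then $P(x) \equiv Q(x) \pmod{2^{n+1}}$.
   Context: For $P, Q, M \in \mathbb{Z}[x]$ with $M \ne 0$, $P \equiv Q \pmod{M}$ means $M$ divides $P - Q$ in $\mathbb{Z}[x]$. For $n \in \mathbb{N}_0$, a polynomial $P(x) \in \mathbb{Z}[x]$ is $n$-good if $P(x^{2^m}) \equiv P(x)^{2^m} \pmod{2^{m+1}}$ for every $m \in \{0, 1, \dots, n\}$. *)

From mathcomp Require Import all_boot all_order all_algebra.
Set Implicit Arguments. Unset Strict Implicit. Unset Printing Implicit Defensive.
Import GRing.Theory Num.Theory.
Local Open Scope ring_scope.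

Definition zpoly_dvd (M P : {poly int}) : Prop := exists R : {poly int}, P = M * R.

Definition zpoly_congr (P Q M : {poly int}) : Prop := zpoly_dvd M (P - Q).

Definition n_good (n : nat) (P : {poly int}) : Prop :=
  forall m : nat, (m <= n)%N ->
    zpoly_congr (P \Po 'X^(2 ^ m)) (P ^+ (2 ^ m)) ((2 ^ m.+1)%:Z)%:P.

(** Write N = 2^n. By n-goodness, P(x^N) and Q(x^N) are congruent modulo 2^(n+1)
    to P^N and Q^N, and P == Q (mod 2) lifts to P^N == Q^N (mod 2^(n+1)) by
    squaring n times, each squaring gaining one factor of 2. Hence 2^(n+1)
    divides (P - Q)(x^N), whose coefficients are exactly those of P - Q. *)

From mathcomp Require Import all_boot all_order all_algebra.
From mathcomp Require Import ring.
Set Implicit Arguments. Unset Strict Implicit. Unset Printing Implicit Defensive.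
Import GRing.Theory Num.Theory.
Local Open Scope ring_scope.

Lemma zpoly_congr_sym (A B M : {poly int}) :
  zpoly_congr A B M -> zpoly_congr B A M.
Proof. by case=> R E; exists (- R); rewrite mulrN -E opprB. Qed.

Lemma zpoly_congr_trans (A B C M : {poly int}) :
  zpoly_congr A B M -> zpoly_congr B C M -> zpoly_congr A C M.
Proof.
by case=> R E [S F]; exists (R + S); rewrite mulrDr -E -F addrA subrK.
Qed.

Lemma zpoly_congr_sqr (A B M : {poly int}) :
  zpoly_congr A B (2 * M) -> zpoly_congr (A ^+ 2) (B ^+ 2) (2 * (2 * M)).
Proof.
case=> R E; exists (M * R ^+ 2 + B * R).
have -> : A = B + 2 * M * R by rewrite -E; ring.
ring.
Qed.

Lemma polyC_exp2S (k : nat) :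
  ((2 ^ k.+1)%:Z)%:P = 2 * ((2 ^ k)%:Z)%:P :> {poly int}.
Proof. by rewrite expnS PoszM rmorphM /= (polyC_natr _ 2). Qed.

Lemma zpoly_congr_exp2n (A B : {poly int}) (k : nat) :
  zpoly_congr A B (2%:Z)%:P ->
  zpoly_congr (A ^+ (2 ^ k)) (B ^+ (2 ^ k)) ((2 ^ k.+1)%:Z)%:P.
Proof.
move=> AB; elim: k => [|k IHk]; first by rewrite !expr1.
rewrite expnS mulnC !exprM 2!polyC_exp2S.
by apply: zpoly_congr_sqr; rewrite -polyC_exp2S.
Qed.

(* The coefficient of x^(i N) in D(x^N) is the i-th coefficient of D. *)
Lemma zpoly_dvd_comp_Xn (D : {poly int}) (c : int) (N : nat) :
  (0 < N)%N -> c != 0 -> zpoly_dvd c%:P (D \Po 'X^N) -> zpoly_dvd c%:P D.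
Proof.
move=> N_gt0 c_neq0 [S E]; exists (\poly_(i < size D) (D`_i %/ c)%Z).
apply/polyP => i; rewrite coefCM coef_poly.
case: ltnP => [_ | hi]; last by rewrite mulr0 nth_default.
have <- : (D \Po 'X^N)`_(i * N) = D`_i.
  by rewrite coef_comp_poly_Xn // dvdn_mull // mulnK.
by rewrite E coefCM [X in (X %/ c)%Z]mulrC mulzK.
Qed.

Theorem lemma3p6 (n : nat) (P Q : {poly int}) :
  n_good n P -> n_good n Q ->
  zpoly_congr P Q (2%:Z)%:P ->
  zpoly_congr P Q ((2 ^ n.+1)%:Z)%:P.
Proof.
move=> goodP goodQ PQ2.
apply: (@zpoly_dvd_comp_Xn _ _ (2 ^ n)); first by rewrite expn_gt0.
  by rewrite eqz_nat expn_eq0.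
rewrite comp_polyB.
apply: zpoly_congr_trans (goodP n (leqnn n)) _.
apply: zpoly_congr_trans (zpoly_congr_exp2n n PQ2) _.
exact/zpoly_congr_sym/(goodQ n (leqnn n)).
Qed.
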